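(* Let $G$ be a finite transitive permutation group whose point stabilizers have order $2$. Then $G$ has the EKR property if and only if $$\sum_{\chi}\frac{\chi(g)^3}{\chi(1)}=0,$$ where $\chi$ runs through the set of all complex irreducible characters of $G$ and $g$ is any non-identity element of $G$ fixing a point.
   Context: For a permutation group $G$ on a finite set $V$, a subset $\mathcal{F}\subseteq G$ is intersecting if for all $g,h\in\mathcal{F}$ there is $v\in V$ with $g(v)=h(v)$. $G$ has the Erdős–Ko–Rado (EKR) property if the maximum size of an intersecting set of $G$ equals the maximum order of a point stabilizer $G_v$, $v\in V$. *)

From mathcomp Require Import all_boot all_order all_algebra all_fingroup all_solvable all_field all_character.
Set Implicit Arguments. Unset Strict Implicit. Unset Printing Implicit Defensive.

Definition intersecting (V : finType) (F : {set {perm V}}) : bool :=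
  [forall g in F, forall h in F, exists v : V, g v == h v].

Definition EKR (V : finType) (G : {group {perm V}}) : Prop :=
  \max_(F : {set {perm V}} | (F \subset G) && intersecting F) #|F|
  = \max_(v : V) #|('C_G[v | 'P])%g|.

From mathcomp Require Import all_boot all_order all_algebra all_fingroup all_solvable all_field all_character.
Import GRing.Theory Num.Theory.

Set Implicit Arguments.
Unset Strict Implicit.
Unset Printing Implicit Defensive.

(* Translating an intersecting set by one of its elements, any two of its
   elements a, b give a non-identity element b a^-1 of G with a fixed point;
   conversely x, y, x y with fixed points give the intersecting set
   {1, y, x y}.  So, when the point stabilizers have order 2, G is EKR iff
   no product of two non-identity point-fixing elements is again one.  These
   elements form a single real conjugacy class C (transitivity), and by the
   class multiplication formula the number of (x, y) in C x C with x y = g is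
   a positive multiple of the character sum, for g in C. *)

Local Open Scope group_scope.

Lemma three_distinct_elements (T : finType) (F : {set T}) :
  2 < #|F| -> exists a b c, [/\ a \in F, b \in F, c \in F & [/\ a != b, a != c & b != c]].
Proof.
move=> F3; have [a aF] : exists a, a \in F by apply/set0Pn; rewrite -card_gt0 ltnW // ltnW.
move: F3; rewrite (cardsD1 a) aF add1n ltnS => Fa2.
have [b] : exists b, b \in F :\ a by apply/set0Pn; rewrite -card_gt0 ltnW.
rewrite in_setD1 => /andP[ba bF].
have [c] : exists c, c \in F :\ a :\ b.
  by apply/set0Pn; rewrite -card_gt0; move: Fa2; rewrite (cardsD1 b) !inE ba bF.
rewrite !in_setD1 => /and3P[cb ca cF].
by exists a, b, c; rewrite eq_sym ba [a == c]eq_sym ca eq_sym cb.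
Qed.

Section IntersectingPermutations.
Variable V : finType.
Implicit Types (F : {set {perm V}}) (G : {group {perm V}}) (a b c g h : {perm V}).

Lemma intersectingP F :
  reflect (forall g h, g \in F -> h \in F -> exists v, g v = h v) (intersecting F).
Proof.
apply: (iffP forall_inP) => [Fint g h gF hF | Fagree g gF].
  by have /forall_inP/(_ h hF)/existsP[v /eqP] := Fint g gF; exists v.
apply/forall_inP => h hF; have [v e] := Fagree g h gF hF.
by apply/existsP; exists v; apply/eqP.
Qed.

Lemma intersecting_astab1 G v : intersecting 'C_G[v | 'P].
Proof.
apply/intersectingP => g h /setIP[_ /astab1P gv] /setIP[_ /astab1P hv].
by exists v; rewrite -[g v]/(aperm v g) -[h v]/(aperm v h) gv hv.
Qed.

Lemma intersecting3 a b c (u v w : V) :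
  a u = b u -> a v = c v -> b w = c w -> intersecting [set a; b; c].
Proof.
move=> eab eac ebc.
have inF z : z \in [set a; b; c] -> [\/ z = a, z = b | z = c].
  by rewrite !inE => /orP[/orP[/eqP|/eqP]|/eqP] ->; [constructor 1|constructor 2|constructor 3].
apply/intersectingP => g h /inF gF /inF hF.
by case: gF => ->; case: hF => ->;
  [exists u | exists u | exists v | exists u | exists u | exists w | exists v | exists w | exists v].
Qed.

Definition nontrivial_fixers G : {set {perm V}} :=
  [set g in G | (g != 1) && [exists v, g v == v]].

Lemma nontrivial_fixersP G g :
  reflect [/\ g \in G, g != 1 & exists v, g v = v] (g \in nontrivial_fixers G).
Proof.
rewrite inE; apply: (iffP and3P) => [[Gg g1 /existsP[v /eqP gv]] | [Gg g1 [v gv]]].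
  by split=> //; exists v.
by split=> //; apply/existsP; exists v; apply/eqP.
Qed.

Lemma nontrivial_fixersV G g :
  g \in nontrivial_fixers G -> g^-1 \in nontrivial_fixers G.
Proof.
case/nontrivial_fixersP=> Gg g1 [v gv]; apply/nontrivial_fixersP.
by rewrite groupV invg_eq1; split=> //; exists v; rewrite -{1}gv permK.
Qed.

Lemma mulgV_fix a b v : a v = b v -> (b * a^-1) v = v.
Proof. by move=> eab; rewrite permM -eab permK. Qed.

Lemma conjg_fix g h v : g v = v -> (g ^ h) (h v) = h v.
Proof. by move=> gv; rewrite /conjg !permM permK gv. Qed.

Lemma intersecting_mulgV_fixer G F a b :
  F \subset G -> intersecting F -> a \in F -> b \in F -> a != b ->
  b * a^-1 \in nontrivial_fixers G.
Proof.
move=> sFG /intersectingP Fint aF bF ab; apply/nontrivial_fixersP; split.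
- by rewrite groupM ?groupV // (subsetP sFG).
- by rewrite -eq_mulgV1 eq_sym.
- by have [v eab] := Fint a b aF bF; exists v; apply: mulgV_fix.
Qed.

Lemma intersecting_mul_fixers G g x y :
  x \in nontrivial_fixers G -> y \in nontrivial_fixers G ->
  g \in nontrivial_fixers G -> x * y = g ->
  [/\ [set 1; y; g] \subset G, intersecting [set 1; y; g] & #|[set 1; y; g]| = 3].
Proof.
case/nontrivial_fixersP=> _ x1 [u xu] /nontrivial_fixersP[Gy y1 [w yw]].
case/nontrivial_fixersP=> Gg g1 [v gv] xyg.
have yg : y != g.
  by apply: contra x1 => /eqP yg; apply/eqP/(mulIg y); rewrite mul1g xyg yg.
split.
- by apply/subsetP => z; rewrite !inE => /orP[/orP[/eqP->|/eqP->]|/eqP->].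
- by apply: (@intersecting3 1 y g w v u); rewrite ?perm1 ?yw ?gv // -xyg permM xu.
- rewrite setUC !cardsU1 cards1 !inE.
  by rewrite (negPf g1) [g == y]eq_sym (negPf yg) [1 == y]eq_sym (negPf y1).
Qed.

Lemma intersecting_small_iff G :
  (forall F, F \subset G -> intersecting F -> #|F| <= 2) <->
  (forall g x y, x \in nontrivial_fixers G -> y \in nontrivial_fixers G ->
     g \in nontrivial_fixers G -> x * y != g).
Proof.
split=> [small g x y xN yN gN | no_prod F sFG Fint].
  apply/eqP => xyg; have [sG Fint F3] := intersecting_mul_fixers xN yN gN xyg.
  by have := small _ sG Fint; rewrite F3.
rewrite leqNgt; apply/negP => /three_distinct_elements[a [b [c [aF bF cF [ab ac bc]]]]].
have := no_prod (c * a^-1) (c * b^-1) (b * a^-1).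
rewrite !(intersecting_mulgV_fixer sFG Fint) // => /(_ isT isT isT).
by rewrite -mulgA mulKg eqxx.
Qed.

End IntersectingPermutations.

Section StabilizersOfOrderTwo.
Variables (V : finType) (G : {group {perm V}}).
Hypothesis G_trans : [transitive G, on [set: V] | 'P].
Hypothesis stab2 : forall v : V, #|'C_G[v | 'P]| = 2.

Lemma astab1_nontrivial_uniq v g h :
  g \in 'C_G[v | 'P] -> h \in 'C_G[v | 'P] -> g != 1 -> h != 1 -> g = h.
Proof.
move=> gS hS g1 h1; have /eqP := stab2 v.
rewrite (cardsD1 1) group1 add1n eqSS => /cards1P[t St].
have : g \in 'C_G[v | 'P] :\ 1 by rewrite in_setD1 g1 gS.
have : h \in 'C_G[v | 'P] :\ 1 by rewrite in_setD1 h1 hS.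
by rewrite St !inE => /eqP-> /eqP->.
Qed.

Lemma nontrivial_fixers_conjugate g h :
  g \in nontrivial_fixers G -> h \in nontrivial_fixers G -> h \in g ^: G.
Proof.
case/nontrivial_fixersP=> Gg g1 [v gv] /nontrivial_fixersP[Gh h1 [w hw]].
have [k Gk /= wkv] := atransP2 G_trans (in_setT v) (in_setT w).
apply/imsetP; exists k => //; apply: (canRL (conjgKV k)).
apply: (@astab1_nontrivial_uniq v); rewrite ?conjg_eq1 //; apply/setIP; split=> //.
- by rewrite groupJ ?groupV.
- apply/astab1P; rewrite /= apermE.
  have -> : v = k^-1 w by rewrite wkv apermE permK.
  exact: conjg_fix.
- exact/astab1P.
Qed.

Lemma nontrivial_fixers_class g :
  g \in nontrivial_fixers G -> nontrivial_fixers G = g ^: G.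
Proof.
move=> gN; apply/setP => h; apply/idP/idP; first exact: nontrivial_fixers_conjugate.
case/imsetP=> k Gk ->; case/nontrivial_fixersP: gN => Gg g1 [v gv].
by apply/nontrivial_fixersP; rewrite groupJ ?conjg_eq1 //; split=> //; exists (k v); apply: conjg_fix.
Qed.

Lemma EKR_iff_intersecting_small :
  EKR G <-> forall F : {set {perm V}}, F \subset G -> intersecting F -> #|F| <= 2.
Proof.
have max_stab : \max_(v : V) #|'C_G[v | 'P]| <= 2.
  by apply/bigmax_leqP => v _; rewrite stab2.
have stab_le (F : {set {perm V}}) : intersecting F -> #|F| <= 2 ->
    #|F| <= \max_(v : V) #|'C_G[v | 'P]|.
  move=> /intersectingP Fint F2.
  have [-> | /set0Pn[a aF]] := eqVneq F set0; first by rewrite cards0.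
  have [v _] := Fint a a aF aF.
  by apply: leq_trans F2 _; rewrite -(stab2 v) (leq_bigmax_cond v).
split=> [EKR_G F sFG Fint | small].
  by apply: leq_trans max_stab; rewrite -EKR_G (leq_bigmax_cond F) ?sFG.
apply/eqP; rewrite eqn_leq; apply/andP; split.
  by apply/bigmax_leqP => F /andP[sFG Fint]; exact: stab_le (small F sFG Fint).
apply/bigmax_leqP => v _; apply: (leq_bigmax_cond 'C_G[v | 'P]).
by rewrite subsetIl intersecting_astab1.
Qed.

End StabilizersOfOrderTwo.

Local Open Scope ring_scope.

Lemma sum_irr_cube_eq0P (gT : finGroupType) (G : {group gT}) (g : gT) :
  g \in G -> (g^-1 \in g ^: G)%g ->
  reflect (forall x y, x \in (g ^: G)%g -> y \in (g ^: G)%g -> (x * y != g)%g)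
          (\sum_(i < Nirr G) ('chi[G]_i g) ^+ 3 / 'chi[G]_i 1%g == 0).
Proof.
move=> Gg gVG; have clG := mem_classes Gg.
pose k := enum_rank_in clG (g ^: G)%g.
have Dk : enum_val k = (g ^: G)%g by rewrite enum_rankK_in.
have Kg : g \in enum_val k by rewrite Dk class_refl.
have := gring_classM_coef_sum_eq Kg Kg Kg.
rewrite (set_gring_classM_coef _ _ Kg) Dk /=.
have real_irr i : ('chi[G]_i g)^* = 'chi_i g.
  by have [u Gu gVu] := imsetP gVG; rewrite -irr_inv gVu cfunJ.
under eq_bigr => i _ do rewrite real_irr -expr2 -exprSr.
move=> num_pairs; apply: (iffP eqP) => [sum0 x y xG yG | no_pair].
  apply/eqP => xyg; have /eqP := num_pairs; rewrite sum0 mulr0 pnatr_eq0 cards_eq0.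
  by move/eqP/setP/(_ (x, y)); rewrite !inE /= xG yG xyg eqxx.
apply/eqP; move: num_pairs.
have /eqP-> : gring_classM_coef_set (g ^: G) (g ^: G) g == set0.
  by apply/eqP/setP => -[x y]; rewrite !inE /=; apply/andP => -[/andP[xG yG] /eqP]; apply/eqP/no_pair.
rewrite cards0 => /esym/eqP; rewrite mulf_eq0 mulf_eq0 invr_eq0 (negPf (neq0CG G)) orbF.
have classG0 : (g ^: G != set0)%g by apply/set0Pn; exists g; apply: class_refl.
by rewrite pnatr_eq0 muln_eq0 orbb cards_eq0 (negPf classG0).
Qed.

Theorem proposition3p4 (V : finType) (G : {group {perm V}})
  (Htrans : [transitive G, on [set: V] | 'P])
  (Hstab : forall v : V, #|('C_G[v | 'P])%g| = 2%N) :
  EKR G <->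
  (forall g : {perm V}, g \in G -> g != 1%g -> (exists v : V, g v = v) ->
     \sum_(i < Nirr G) ('chi[G]_i g) ^+ 3 / 'chi[G]_i 1%g = 0).
Proof.
have classN := nontrivial_fixers_class Htrans Hstab.
have realC g : g \in nontrivial_fixers G -> (g^-1 \in g ^: G)%g.
  by move=> gN; rewrite -classN ?nontrivial_fixersV.
apply: iff_trans (EKR_iff_intersecting_small Hstab) _.
apply: iff_trans (intersecting_small_iff G) _.
split=> [no_prod g Gg g1 gfix | sum0 g x y xN yN gN].
  have gN : g \in nontrivial_fixers G by apply/nontrivial_fixersP.
  apply/eqP/(sum_irr_cube_eq0P Gg (realC g gN)) => x y.
  by rewrite -classN // => xN yN; apply: no_prod.
case/nontrivial_fixersP: (gN) => Gg g1 gfix.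
have /eqP/(sum_irr_cube_eq0P Gg (realC g gN)) no_pair := sum0 g Gg g1 gfix.
by apply: no_pair; rewrite -(classN g gN).
Qed.
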